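(* Let $\mathcal{A}$ be a Banach algebra such that $\mathrm{rad}(\mathcal{A})=\mathrm{rann}(\mathcal{A})$ and $\mathcal{A}/\mathrm{rad}(\mathcal{A})$ is commutative, suppose $\mathcal{A}$ has a right identity, and let $z\in\mathcal{A}$. Then the following are equivalent: (i) $L_z$ is centralizing; (ii) $L_z$ is skew centralizing; (iii) $z\in Z(\mathcal{A})$.
   Context: $\mathrm{rad}(\mathcal{A})$ is the Jacobson radical and $\mathrm{rann}(\mathcal{A})=\{c\in\mathcal{A}: ac=0\ \forall a\in\mathcal{A}\}$. $L_z(a)=za$. $Z(\mathcal{A})$ is the center. A map $T$ is centralizing if $[T(a),a]=T(a)a-aT(a)\in Z(\mathcal{A})$ for all $a$, and skew centralizing if $\langle T(a),a\rangle=T(a)a+aT(a)\in Z(\mathcal{A})$ for all $a$. *)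

From HB Require Import structures.
From mathcomp Require Import all_boot all_order all_algebra.
From mathcomp Require Import complex.
From mathcomp Require Import all_classical all_reals all_analysis.
Set Implicit Arguments. Unset Strict Implicit. Unset Printing Implicit Defensive.
Import Order.TTheory GRing.Theory Num.Theory.
Import numFieldNormedType.Exports.
Local Open Scope ring_scope.

Definition banach_algebra_mul (R : realType) (V : completeNormedModType R[i])
  (mul : V -> V -> V) : Prop :=
  (forall a b c, mul a (mul b c) = mul (mul a b) c) /\
      (forall a b c, mul (a + b) c = mul a c + mul b c) /\
      (forall a b c, mul a (b + c) = mul a b + mul a c) /\
      (forall (k : R[i]) a b, mul (k *: a) b = k *: mul a b) /\
      (forall (k : R[i]) a b, mul a (k *: b) = k *: mul a b) /\
      (forall a b, `|mul a b| <= `|a| * `|b|).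

Section AlgNotions.
Variables (R : realType) (V : completeNormedModType R[i]) (mul : V -> V -> V).

(* y is left quasi-invertible: exists w with w + y - w y = 0
   (in a unitization: (1 - w)(1 - y) = 1). *)
Definition left_quasi_invertible (y : V) : Prop :=
  exists w : V, w + y - mul w y = 0.

(* Jacobson radical (Jacobson's characterization for possibly non-unital
   algebras): x in rad(A) iff a x is left quasi-invertible for all a. *)
Definition jacobson_rad (x : V) : Prop :=
  forall a : V, left_quasi_invertible (mul a x).

Definition rann (c : V) : Prop := forall a : V, mul a c = 0.

Definition alg_center (c : V) : Prop := forall a : V, mul c a = mul a c.

Definition quotient_rad_commutative : Prop :=
  forall a b : V, jacobson_rad (mul a b - mul b a).

Definition has_right_identity : Prop := exists e : V, forall a, mul a e = a.

Definition left_mul_map (z : V) : V -> V := fun a => mul z a.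

Definition centralizing (T : V -> V) : Prop :=
  forall a, alg_center (mul (T a) a - mul a (T a)).

Definition skew_centralizing (T : V -> V) : Prop :=
  forall a, alg_center (mul (T a) a + mul a (T a)).

End AlgNotions.

From HB Require Import structures.
From mathcomp Require Import all_boot all_order all_algebra.
From mathcomp Require Import complex.
From mathcomp Require Import all_classical all_reals all_analysis.
Import Order.TTheory GRing.Theory Num.Theory.
Import numFieldNormedType.Exports.
Set Implicit Arguments. Unset Strict Implicit.
Local Open Scope ring_scope.

(* Since rad(A) = rann(A) and A/rad(A) is commutative, every commutator is
   killed on the left by every element: a(bc) = a(cb).  With a right identity
   e this gives z(ea) = za.  Both (skew) centralizing conditions,
   tested against e, collapse to z(aa) = (aa)z for all a; polarizing this at
   a + e and at ea (dividing by 2) yields za = az.  Conversely, if z is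
   central then so is every zc, and the (skew) commutator of L_z at a is
   0 (resp. 2z(aa)). *)

Lemma natmul2_inj (K : numFieldType) (V : lmodType K) (x y : V) :
  x *+ 2 = y *+ 2 -> x = y.
Proof.
rewrite -(scaler_nat 2 x) -(scaler_nat 2 y) => /scalerI; apply.
by rewrite pnatr_eq0.
Qed.

Section RannCommutators.
Variables (K : numFieldType) (V : lmodType K) (mul : V -> V -> V).
Hypothesis mulA : forall a b c, mul a (mul b c) = mul (mul a b) c.
Hypothesis mulDl : forall a b c, mul (a + b) c = mul a c + mul b c.
Hypothesis mulDr : forall a b c, mul a (b + c) = mul a b + mul a c.
Hypothesis commutator_rann : forall a b c, mul a (mul b c - mul c b) = 0.

Definition central (x : V) : Prop := forall a, mul x a = mul a x.

Lemma mul0r a : mul 0 a = 0.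
Proof. by apply: (addrI (mul 0 a)); rewrite -mulDl !addr0. Qed.

Lemma mulr0 a : mul a 0 = 0.
Proof. by apply: (addrI (mul a 0)); rewrite -mulDr !addr0. Qed.

Lemma mulrBr a b c : mul a (b - c) = mul a b - mul a c.
Proof.
have mulNr : mul a (- c) = - mul a c.
  by apply/eqP; rewrite -addr_eq0 -mulDr addNr mulr0.
by rewrite mulDr mulNr.
Qed.

Lemma mul_commr a b c : mul a (mul b c) = mul a (mul c b).
Proof. by apply/eqP; rewrite -subr_eq0 -mulrBr commutator_rann. Qed.

Lemma mul_sq_mull a z : mul a (mul z a) = mul (mul a a) z.
Proof. by rewrite mul_commr mulA. Qed.

Lemma central0 : central 0.
Proof. by move=> a; rewrite mul0r mulr0. Qed.

Lemma centralD x y : central x -> central y -> central (x + y).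
Proof. by move=> cx cy a; rewrite mulDl mulDr cx cy. Qed.

Lemma central_mull z c : central z -> central (mul z c).
Proof. by move=> cz b; rewrite -mulA mul_commr mulA cz -mulA. Qed.

Variable e : V.
Hypothesis mulr_e : forall a, mul a e = a.

Lemma mul_e_mid x a : mul x (mul e a) = mul x a.
Proof. by rewrite mul_commr mulr_e. Qed.

Lemma central_of_central_squares z :
  (forall a, mul z (mul a a) = mul (mul a a) z) -> central z.
Proof.
move=> sqz.
have ez : mul e z = z by rewrite -[RHS]mulr_e -(mulr_e e) sqz.
have polar a : mul z a *+ 2 = mul a z + mul (mul e a) z.
  have := sqz (a + e).
  rewrite !(mulDl, mulDr) !mulr_e mul_e_mid sqz ez mulr2n !addrA => /addIr.
  by rewrite -!addrA => /addrI.
have eaz a : mul z a = mul (mul e a) z.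
  by apply: natmul2_inj; rewrite -mul_e_mid polar mulA mulr_e mulr2n.
by move=> a; apply: (addIr (mul z a)); rewrite -mulr2n polar eaz addrC.
Qed.

Lemma Lz_centralizing_iff_central z :
  (forall a, central (mul (mul z a) a - mul a (mul z a))) <-> central z.
Proof.
have comm0 a : central z -> mul (mul z a) a - mul a (mul z a) = 0.
  by move=> cz; rewrite mul_sq_mull -cz mulA subrr.
split=> [centr | cz a]; last by rewrite comm0 //; exact: central0.
apply: central_of_central_squares => a.
have := centr a e; rewrite mulr_e mulrBr (mul_commr e (mul z a)) subrr.
by move/eqP; rewrite subr_eq0 => /eqP comm_a; rewrite mulA comm_a mul_sq_mull.
Qed.

Lemma Lz_skew_centralizing_iff_central z :
  (forall a, central (mul (mul z a) a + mul a (mul z a))) <-> central z.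
Proof.
split=> [skew | cz a]; last first.
  by rewrite mul_sq_mull -cz -mulA; apply: centralD; apply: central_mull.
have skew_e a :
    mul (mul z a) a + mul a (mul z a) = (mul e (mul z (mul a a))) *+ 2.
  by rewrite -[LHS]mulr_e skew mulDr (mul_commr e a) -(mulA z a a) mulr2n.
have ez : mul e z = z.
  by have := skew_e e; rewrite !mulr_e mulr2n => /addIr <-.
apply: central_of_central_squares => a.
have := skew_e a; rewrite (mulA e z) ez mulr2n -(mulA z a a) => /addrI comm_a.
by rewrite -comm_a mul_sq_mull.
Qed.

End RannCommutators.

Theorem theorem5p5 (R : realType) (V : completeNormedModType R[i])
  (mul : V -> V -> V) (hA : banach_algebra_mul mul)
  (hrad : forall x : V, jacobson_rad mul x <-> rann mul x)
  (hcomm : quotient_rad_commutative mul)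
  (hid : has_right_identity mul) (z : V) :
  (centralizing mul (left_mul_map mul z) <-> alg_center mul z) /\
  (skew_centralizing mul (left_mul_map mul z) <-> alg_center mul z).
Proof.
case: hA => mulA [mulDl [mulDr _]]; case: hid => e mulr_e.
have commutator_rann a b c : mul a (mul b c - mul c b) = 0.
  exact: (hrad _).1 (hcomm b c) a.
split.
- exact: (Lz_centralizing_iff_central mulA mulDl mulDr commutator_rann mulr_e).
- exact: (Lz_skew_centralizing_iff_central mulA mulDl mulDr commutator_rann mulr_e).
Qed.
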